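(* Consider the ergodic Markov process described in the context, with equilibrium distribution $p$. If $p_1,\dots,p_{2^cK}:W\to\mathbb C$ are $2^cK$ linearly independent, absolutely convergent solutions of the inner equations, then there are (possibly complex-valued) constants $\alpha_1,\dots,\alpha_{2^cK}$, uniquely determined (by the equilibrium equations for the states in $V$ and the states $\mathbf n\in W$ with $n_0<K$, together with the normalization condition), such that \[ p(\mathbf n)=\sum_{j=1}^{2^cK}\alpha_j p_j(\mathbf n),\qquad \mathbf n\in W. \]
   Context: Fix integers $c\ge 1$ and $K\ge 1$. Consider an irreducible continuous-time Markov process on the state space $V\cup W$, where $V$ is a finite set and $W=\{\mathbf n=(n_0,n_1,\dots,n_c): n_0\in\{0,1,2,\dots\},\ n_i\in\{0,1\},\ i=1,\dots,c\}$. For each $i\in\{1,\dots,c\}$ and each integer $k\le K$ there are nonnegative rates $a_{k,i},b_{k,i},c_{k,i},d_{k,i}$. From a state $\mathbf n\in W$, for each $i$ and each $k\in\{-n_0,\dots,K\}$, the process jumps (changing only coordinates $0$ and $i$) from $(n_0,n_i)=(n_0,0)$ to $(n_0+k,1)$ at rate $a_{k,i}$ and to $(n_0+k,0)$ at rate $b_{k,i}$, and from $(n_0,n_i)=(n_0,1)$ to $(n_0+k,1)$ at rate $c_{k,i}$ and to $(n_0+k,0)$ at rate $d_{k,i}$; moreover from $\mathbf n$ it jumps into $V$ with total rate $\sum_{i=1}^c\sum_{k\le -n_0-1}\bigl((1-n_i)(a_{k,i}+b_{k,i})+n_i(c_{k,i}+d_{k,i})\bigr)$. There are no other transitions out of $W$.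 From states in $V$ no transitions are possible to states $\mathbf n\in W$ with $n_0\ge K$. All total outgoing rates are finite. The process is assumed ergodic and $p(\mathbf n)$ denotes its equilibrium probability of state $\mathbf n$. Let $e_i$ be the vector of length $c+1$ (indexed $0,\dots,c$) with a $1$ in position $i$ and zeros elsewhere. The inner equations are, for a function $q:W\to\mathbb C$ and all $\mathbf n\in W$ with $n_0\ge K$: \[\sum_{i=1}^c\sum_{k=-\infty}^K\bigl((1-n_i)(a_{k,i}+b_{k,i})+n_i(c_{k,i}+d_{k,i})\bigr)q(\mathbf n)=\sum_{i=1}^c\sum_{k=-\infty}^K\Bigl((1-n_i)\bigl(b_{k,i}q(\mathbf n-ke_0)+d_{k,i}q(\mathbf n-ke_0+e_i)\bigr)+n_i\bigl(a_{k,i}q(\mathbf n-ke_0-e_i)+c_{k,i}q(\mathbf n-ke_0)\bigr)\Bigr).\] A solution $q$ is called absolutely convergent if $\sum_{\mathbf n\in W}|q(\mathbf n)|<\infty$. *)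

From Stdlib Require Import Reals ZArith Relations.
From Coquelicot Require Import Coquelicot.
From mathcomp Require Import ssreflect ssrfun ssrbool eqtype ssrnat seq choice fintype finfun bigop.

Set Implicit Arguments.
Unset Strict Implicit.

(* Paper index i in {1..c}  <-> here i : 'I_c (i.e. paper's i = our i + 1). *)
(* States of W: n = (n_0, (n_1..n_c)), n_0 : nat, bits as a finite function. *)
Definition W (c : nat) : Type := (nat * {ffun 'I_c -> bool})%type.

(* Parameters of the process.  ra/rb/rc/rd i k are the rates
   a_{k,i}, b_{k,i}, c_{k,i}, d_{k,i} (only k <= K is relevant).
   QVV v v' : rate from v to v' (V -> V);
   QVW v n  : rate from v to n (V -> W);
   QWV n v  : rate from n to v (W -> V). *)
Record model (c K : nat) (V : finType) := Model {
  ra : 'I_c -> Z -> R;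
  rb : 'I_c -> Z -> R;
  rc : 'I_c -> Z -> R;
  rd : 'I_c -> Z -> R;
  QVV : V -> V -> R;
  QVW : V -> W c -> R;
  QWV : W c -> V -> R }.

Definition Rsum {I : finType} (F : I -> R) : R := \big[Rplus/0%R]_(i : I) F i.
Definition Csum {I : finType} (F : I -> C) : C := \big[Cplus/RtoC 0]_(i : I) F i.


Definition rate_i c K V (M : model c K V) (i : 'I_c) (k : Z) (nb mb : bool) : R :=
  match nb, mb with
  | false, true  => ra M i k
  | false, false => rb M i k
  | true,  true  => rc M i k
  | true,  false => rd M i k
  end.

Definition rtot c K V (M : model c K V) (i : 'I_c) (k : Z) (nb : bool) : R :=
  (rate_i M i k nb true + rate_i M i k nb false)%R.

(* Total rate of transitions W -> W from n to m (summing all i, k = m_0 - n_0 <= K,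
   with m differing from n at most in coordinates 0 and i). Self-loops included. *)
Definition rateWW c K V (M : model c K V) (n m : W c) : R :=
  Rsum (fun i : 'I_c =>
    if [forall j : 'I_c, (j != i) ==> (m.2 j == n.2 j)] then
      let k := (Z.of_nat m.1 - Z.of_nat n.1)%Z in
      if (k <=? Z.of_nat K)%Z then rate_i M i k (n.2 i) (m.2 i) else 0%R
    else 0%R).

Definition rate_to_V c K V (M : model c K V) (n : W c) : R :=
  Series (fun j : nat =>
    Rsum (fun i : 'I_c => rtot M i (- Z.of_nat n.1 - 1 - Z.of_nat j)%Z (n.2 i))).

Definition model_ok c K V (M : model c K V) : Prop :=
  (forall i k, (k <= Z.of_nat K)%Z ->
     0 <= ra M i k /\ 0 <= rb M i k /\ 0 <= rc M i k /\ 0 <= rd M i k)%R /\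
  (* finite total outgoing rates: the rates are summable over k <= K *)
  (forall i, ex_series (fun j : nat => ra M i (Z.of_nat K - Z.of_nat j)%Z) /\
             ex_series (fun j : nat => rb M i (Z.of_nat K - Z.of_nat j)%Z) /\
             ex_series (fun j : nat => rc M i (Z.of_nat K - Z.of_nat j)%Z) /\
             ex_series (fun j : nat => rd M i (Z.of_nat K - Z.of_nat j)%Z)) /\
  (forall v v', 0 <= QVV M v v')%R /\
  (forall v n, 0 <= QVW M v n)%R /\
  (forall n v, 0 <= QWV M n v)%R /\
  (forall v n, (K <= n.1)%nat -> QVW M v n = 0%R) /\
  (forall n, Rsum (fun v => QWV M n v) = rate_to_V M n) /\
  (forall v, ex_series (fun m0 : nat => Rsum (fun b => QVW M v (m0, b)))).

Definition rate c K V (M : model c K V) (x y : (V + W c)%type) : R :=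
  match x, y with
  | inl v, inl v' => QVV M v v'
  | inl v, inr n => QVW M v n
  | inr n, inl v => QWV M n v
  | inr n, inr m => rateWW M n m
  end.

Definition irreducible c K V (M : model c K V) : Prop :=
  forall x y : (V + W c)%type,
    clos_refl_trans _ (fun x y => x <> y /\ (0 < rate M x y)%R) x y.

(* Total outgoing rates (self-loops included; they cancel in the balance equations). *)
Definition outV c K V (M : model c K V) (v : V) : R :=
  (Rsum (fun v' => QVV M v v') + Series (fun m0 : nat => Rsum (fun b => QVW M v (m0, b))))%R.
Definition outW c K V (M : model c K V) (n : W c) : R :=
  (Series (fun m0 : nat => Rsum (fun b => rateWW M n (m0, b))) + Rsum (fun v => QWV M n v))%R.

Definition balanceV c K V (M : model c K V) (qV : V -> C) (qW : W c -> C) (y : V) : Prop :=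
  is_series (fun m0 : nat => Csum (fun b => Cmult (qW (m0, b)) (RtoC (QWV M (m0, b) y))))
    (Cminus (Cmult (qV y) (RtoC (outV M y)))
            (Csum (fun v => Cmult (qV v) (RtoC (QVV M v y))))).
Definition balanceW c K V (M : model c K V) (qV : V -> C) (qW : W c -> C) (n : W c) : Prop :=
  is_series (fun m0 : nat => Csum (fun b => Cmult (qW (m0, b)) (RtoC (rateWW M (m0, b) n))))
    (Cminus (Cmult (qW n) (RtoC (outW M n)))
            (Csum (fun v => Cmult (qV v) (RtoC (QVW M v n))))).
Definition normalized c (V : finType) (qV : V -> C) (qW : W c -> C) : Prop :=
  is_series (fun m0 : nat => Csum (fun b => qW (m0, b))) (Cminus (RtoC 1) (Csum qV)).

Definition equilibrium c K V (M : model c K V) (pV : V -> R) (pW : W c -> R) : Prop :=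
  (forall v, 0 <= pV v)%R /\ (forall n, 0 <= pW n)%R /\
  (forall y, balanceV M (fun v => RtoC (pV v)) (fun n => RtoC (pW n)) y) /\
  (forall n, balanceW M (fun v => RtoC (pV v)) (fun n => RtoC (pW n)) n) /\
  normalized (fun v => RtoC (pV v)) (fun n => RtoC (pW n)).

Definition abs_conv c (q : W c -> C) : Prop :=
  ex_series (fun n0 : nat => Rsum (fun b => Cmod (q (n0, b)))).

Definition setbit c (f : {ffun 'I_c -> bool}) (i : 'I_c) (x : bool) : {ffun 'I_c -> bool} :=
  [ffun j => if j == i then x else f j].

(* The inner equations at n (n_0 >= K); the sum over k = K - j, j : nat. *)
Definition inner_eq c K V (M : model c K V) (q : W c -> C) (n : W c) : Prop :=
  is_series
    (fun j : nat =>
       let k := (Z.of_nat K - Z.of_nat j)%Z in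
       let m0 := (n.1 - K + j)%nat in   (* = n_0 - k *)
       Csum (fun i : 'I_c =>
         if n.2 i then
           Cplus (Cmult (RtoC (ra M i k)) (q (m0, setbit n.2 i false)))
                 (Cmult (RtoC (rc M i k)) (q (m0, n.2)))
         else
           Cplus (Cmult (RtoC (rb M i k)) (q (m0, n.2)))
                 (Cmult (RtoC (rd M i k)) (q (m0, setbit n.2 i true)))))
    (Cmult (RtoC (Series (fun j : nat =>
              Rsum (fun i : 'I_c => rtot M i (Z.of_nat K - Z.of_nat j)%Z (n.2 i)))))
           (q n)).

Definition inner_solution c K V (M : model c K V) (q : W c -> C) : Prop :=
  forall n : W c, (K <= n.1)%nat -> inner_eq M q n.

Definition lin_comb c N (alpha : 'I_N -> C) (ps : 'I_N -> W c -> C) (n : W c) : C :=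
  Csum (fun j => Cmult (alpha j) (ps j n)).

Definition lin_indep c N (ps : 'I_N -> W c -> C) : Prop :=
  forall alpha : 'I_N -> C, (forall n, lin_comb alpha ps n = RtoC 0) -> forall j, alpha j = RtoC 0.

From Stdlib Require Import Reals ZArith Relations Lra Lia FunctionalExtensionality.
From Coquelicot Require Import Coquelicot.
From HB Require Import structures.
From mathcomp Require Import ssreflect ssrfun ssrbool eqtype ssrnat seq choice fintype finfun bigop.
From mathcomp Require Import zify ssralg matrix mxalgebra.
From mathcomp Require boolp.

(* A summable function on V + W solving the inner equations automatically satisfies the
   balance equations at every state with n_0 >= K.  The functions (q_V, sum_j alpha_j p_j)
   therefore form a space of dimension |V| + 2^c K (by linear independence of the p_j), and
   what remains to impose -- balance at V and at the 2^c K states with n_0 < K, one of them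
   replaced by normalization -- is a square linear system.  For a summable signed measure
   the sum of all balance equations is an identity, so the dropped equation is implied; and
   by irreducibility a balanced summable measure of total mass 0 vanishes (its absolute
   value is balanced too, so positivity propagates along every transition).  Hence the
   system is injective, thus solvable, and its solution is p; the same uniqueness gives the
   uniqueness of alpha. *)

Open Scope R_scope.

Lemma Rplus_assoc' : associative Rplus. Proof. by move=> x y z; ring. Qed.
Lemma Rmult_assoc' : associative Rmult. Proof. by move=> x y z; ring. Qed.
HB.instance Definition _ := Monoid.isComLaw.Build R 0 Rplus Rplus_assoc' Rplus_comm Rplus_0_l.
HB.instance Definition _ := Monoid.isComLaw.Build R 1 Rmult Rmult_assoc' Rmult_comm Rmult_1_l.
HB.instance Definition _ := Monoid.isMulLaw.Build R 0 Rmult Rmult_0_l Rmult_0_r.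
HB.instance Definition _ :=
  Monoid.isAddLaw.Build R Rmult Rplus Rmult_plus_distr_r Rmult_plus_distr_l.

(** * Nonnegative series *)

Section NonnegSeries.
Implicit Types (a : nat -> R) (s B : R).

Lemma sum_n_ge0 {a} n : (forall k, 0 <= a k) -> 0 <= sum_n a n.
Proof.
move=> a0; elim: n => [|n IH]; first by rewrite sum_O.
rewrite sum_Sn; move: (a0 n.+1); rewrite /plus /=; lra.
Qed.

Lemma sum_n_le_Sn {a} n : (forall k, 0 <= a k) -> sum_n a n <= sum_n a n.+1.
Proof. move=> a0; rewrite sum_Sn; move: (a0 n.+1); rewrite /plus /=; lra. Qed.

Lemma sum_n_le_is_series {a s} n : (forall k, 0 <= a k) -> is_series a s -> sum_n a n <= s.
Proof.
move=> a0 as_; apply: is_lim_seq_incr_compare; first exact: as_.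
by move=> k; exact: sum_n_le_Sn.
Qed.

Lemma term_le_is_series {a s} n : (forall k, 0 <= a k) -> is_series a s -> a n <= s.
Proof.
move=> a0 as_; apply: Rle_trans (sum_n_le_is_series n a0 as_).
case: n => [|n]; first by rewrite sum_O; lra.
rewrite sum_Sn; move: (sum_n_ge0 n a0); rewrite /plus /=; lra.
Qed.

Lemma is_series_ge0 {a s} : (forall k, 0 <= a k) -> is_series a s -> 0 <= s.
Proof. move=> a0 as_; exact: Rle_trans (a0 O) (term_le_is_series O a0 as_). Qed.

Lemma is_series_le_ub {a s B} : is_series a s -> (forall n, sum_n a n <= B) -> s <= B.
Proof.
move=> as_ aB; exact: (is_lim_seq_le (sum_n a) (fun _ => B) s B aB as_ (is_lim_seq_const B)).
Qed.

Lemma is_series_bounded {a B} : (forall k, 0 <= a k) -> (forall n, sum_n a n <= B) ->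
  exists s, is_series a s /\ s <= B.
Proof.
move=> a0 aB.
have [s as_] := ex_finite_lim_seq_incr (sum_n a) B (fun n => sum_n_le_Sn n a0) aB.
by exists s; split; last exact: is_series_le_ub as_ aB.
Qed.

Lemma is_series_zero {a} : (forall n, a n = 0) -> is_series a 0.
Proof.
move=> a0; change (is_lim_seq (sum_n a) 0).
apply: (is_lim_seq_ext (fun _ => 0)); last exact: is_lim_seq_const.
elim=> [|n IH]; first by rewrite sum_O a0.
by rewrite sum_Sn -IH a0 /plus /= Rplus_0_r.
Qed.

Lemma is_series_sum_n {a : nat -> nat -> R} {N} : (forall k, ex_series (a k)) ->
  is_series (fun l => sum_n (fun k => a k l) N) (sum_n (fun k => Series (a k)) N).
Proof.
move=> ex_a; elim: N => [|N IH].
  rewrite sum_O; apply: is_series_ext (Series_correct _ (ex_a O)) => l; by rewrite sum_O.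
rewrite sum_Sn; apply: is_series_ext (is_series_plus _ _ _ _ IH (Series_correct _ (ex_a N.+1))).
by move=> l; rewrite sum_Sn.
Qed.

Lemma is_series_swap {a : nat -> nat -> R} {s : nat -> R} {S : R} :
  (forall k l, 0 <= a k l) -> (forall k, is_series (a k) (s k)) -> is_series s S ->
  (forall l, ex_series (fun k => a k l)) /\ is_series (fun l => Series (fun k => a k l)) S.
Proof.
move=> a0 as_ sS.
have ex_col l : ex_series (fun k => a k l).
  apply: (ex_series_le _ s); last by exists S.
  move=> k; rewrite /norm /= /abs /= Rabs_pos_eq //; exact: term_le_is_series (a0 k) (as_ k).
split=> //.
pose t l := Series (fun k => a k l).
have t0 l : 0 <= t l by apply: is_series_ge0 (Series_correct _ (ex_col l)).
have tS L : sum_n t L <= S.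
  rewrite /t -(is_series_unique _ _ (is_series_sum_n (a := fun l k => a k l) (N := L) ex_col)).
  rewrite -(is_series_unique _ _ sS).
  apply: Series_le; last by exists S.
  move=> k; split; [exact: sum_n_ge0 | exact: sum_n_le_is_series (a0 k) (as_ k)].
have [T [tT TS]] := is_series_bounded t0 tS.
suff ST : S <= T by have -> : S = T by lra.
apply: is_series_le_ub sS _ => L.
have -> : sum_n s L = sum_n (fun k => Series (a k)) L.
  by apply: sum_n_ext => k; rewrite (is_series_unique _ _ (as_ k)).
rewrite -(is_series_unique _ _ (is_series_sum_n (N := L) (fun k => ex_intro _ _ (as_ k)))).
rewrite -(is_series_unique _ _ tT); apply: Series_le; last by exists T.
move=> l; split; first exact: sum_n_ge0.
exact: sum_n_le_is_series (Series_correct _ (ex_col l)).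
Qed.

End NonnegSeries.

Lemma sum_n_eq0 {a : nat -> R} {N} : (forall k, (k <= N)%nat -> a k = 0) -> sum_n a N = 0.
Proof.
elim: N => [|N IH] a0; first by rewrite sum_O a0.
by rewrite sum_Sn IH ?a0 // /plus /= ?Rplus_0_r // => k kN; apply: a0; lia.
Qed.

Lemma is_series_finite_support {a : nat -> R} {N} :
  (forall m, (N < m)%nat -> a m = 0) -> is_series a (sum_n a N).
Proof.
move=> a0; apply: (@is_series_decr_n _ _ a N.+1); first lia.
rewrite /plus /opp /= Rplus_opp_r; apply: is_series_zero => k; apply: a0; lia.
Qed.

Lemma is_series_drop_zeros {a : nat -> R} {N L} : (forall m, (m < N)%nat -> a m = 0) ->
  is_series (fun j => a (N + j)%nat) L -> is_series a L.
Proof.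
case: N => [|N] a0 aL; first exact: is_series_ext aL.
apply: (@is_series_decr_n _ _ a N.+1); first lia.
by rewrite sum_n_eq0 => [|k kN]; [rewrite /plus /opp /= Ropp_0 Rplus_0_r | apply: a0; lia].
Qed.

Lemma sum_n_rev (a : nat -> R) N : sum_n (fun m => a (N - m)%nat) N = sum_n a N.
Proof.
have big_sum b n : sum_n b n = \big[Rplus/0]_(0 <= i < n.+1) b i.
  elim: n => [|n IH]; first by rewrite sum_O big_nat1.
  by rewrite sum_Sn IH (big_nat_recr n.+1).
rewrite !big_sum big_nat_rev /=; apply: eq_big_nat => i /andP [_ iN].
by congr a; lia.
Qed.

Section FiniteSums.
Context {I : finType}.
Implicit Types (f g : I -> R).

Lemma Rsum_ext {f g} : (forall i, f i = g i) -> Rsum f = Rsum g.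
Proof. by move=> fg; apply: eq_bigr => i _. Qed.

Lemma Rsum0 : Rsum (fun _ : I => 0) = 0.
Proof. by rewrite /Rsum big1. Qed.

Lemma Rsum_plus f g : Rsum (fun i => f i + g i) = Rsum f + Rsum g.
Proof. exact: big_split. Qed.

Lemma Rsum_scal a f : Rsum (fun i => a * f i) = a * Rsum f.
Proof. by rewrite /Rsum big_distrr. Qed.

Lemma Rsum_le {f g} : (forall i, f i <= g i) -> Rsum f <= Rsum g.
Proof.
move=> fg; rewrite /Rsum; elim/big_rec2: _ => [|i x y _ xy]; first exact: Rle_refl.
by apply: Rplus_le_compat.
Qed.

Lemma Rsum_ge0 {f} : (forall i, 0 <= f i) -> 0 <= Rsum f.
Proof. by move=> f0; rewrite -Rsum0; apply: Rsum_le. Qed.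

Lemma Rsum_term {f} i : (forall i, 0 <= f i) -> f i <= Rsum f.
Proof.
move=> f0; rewrite /Rsum (bigD1 i) //=.
suff : 0 <= \big[Rplus/0]_(j | j != i) f j by lra.
by elim/big_rec: _ => [|j x _ x0]; [exact: Rle_refl | apply: Rplus_le_le_0_compat].
Qed.

Lemma Rsum_abs f : Rabs (Rsum f) <= Rsum (fun i => Rabs (f i)).
Proof.
rewrite /Rsum; elim/big_rec2: _ => [|i x y _ xy]; first by rewrite Rabs_R0; lra.
by apply: Rle_trans (Rabs_triang _ _) _; lra.
Qed.

Lemma is_series_Rsum {F : I -> nat -> R} {s : I -> R} :
  (forall i, is_series (F i) (s i)) -> is_series (fun n => Rsum (fun i => F i n)) (Rsum s).
Proof.
move=> Fs; rewrite /Rsum; elim: (index_enum I) => [|i r IH].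
  by rewrite big_nil; apply: is_series_zero => n; rewrite big_nil.
rewrite big_cons; apply: is_series_ext (is_series_plus _ _ _ _ (Fs i) IH) => n.
by rewrite big_cons.
Qed.

End FiniteSums.

(** * Sums over V + W *)

Section StateSums.
Context {V : finType} {c : nat}.
Local Notation X := (V + W c)%type.
Implicit Types (f g : X -> R) (s t : R).

(* Sums over V + W are the series whose term 0 is the V-part and whose term m+1 is the
   level {n | n_0 = m} of W; [is_Xsum] has the shape used by [balanceV] and [balanceW]. *)
Definition level f (k : nat) : R :=
  if k is m.+1 then Rsum (fun b => f (inr (m, b))) else Rsum (fun v => f (inl v)).

Definition is_Xsum f s : Prop :=
  is_series (fun m => Rsum (fun b => f (inr (m, b)))) (s - Rsum (fun v => f (inl v))).

Definition level_of (x : X) : nat := if x is inr n then n.1.+1 else O.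

Lemma is_XsumE f s : is_Xsum f s <-> is_series (level f) s.
Proof.
split=> fs.
  apply: is_series_decr_1; rewrite /plus /opp /=; exact: fs.
apply: (is_series_incr_1 (level f)); rewrite /plus /=.
by have -> : s - Rsum (fun v => f (inl v)) + Rsum (fun v => f (inl v)) = s by ring.
Qed.

Lemma level_ext {f g} k : (forall x, f x = g x) -> level f k = level g k.
Proof. by move=> fg; case: k => [|k] /=; apply: Rsum_ext. Qed.

Lemma level_ge0 {f} k : (forall x, 0 <= f x) -> 0 <= level f k.
Proof. by move=> f0; case: k => [|k] /=; apply: Rsum_ge0. Qed.

Lemma le_level {f} x : (forall x, 0 <= f x) -> f x <= level f (level_of x).
Proof. by move=> f0; case: x => [v|[m b]] /=; apply: (Rsum_term (f := fun i => f _)). Qed.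

Lemma is_series_level {F : X -> nat -> R} {G : X -> R} l :
  (forall x, is_series (F x) (G x)) -> is_series (fun k => level (F^~ k) l) (level G l).
Proof. by move=> FG; case: l => [|l] /=; apply: is_series_Rsum. Qed.

Lemma level_swap (F : X -> X -> R) k l :
  level (fun x => level (F x) k) l = level (fun y => level (F^~ y) l) k.
Proof. by case: k => [|k]; case: l => [|l]; rewrite /= /Rsum; apply: exchange_big. Qed.

Lemma is_Xsum_ext {f g s} : (forall x, f x = g x) -> is_Xsum f s -> is_Xsum g s.
Proof.
by move=> fg /is_XsumE fs; apply/is_XsumE; apply: is_series_ext fs => k; apply: level_ext.
Qed.

Lemma is_Xsum_eq {f g s t} : is_Xsum f s -> s = t -> (forall x, f x = g x) -> is_Xsum g t.
Proof. by move=> fs <- fg; apply: is_Xsum_ext fs. Qed.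

Lemma is_Xsum_unique {f s t} : is_Xsum f s -> is_Xsum f t -> s = t.
Proof.
move=> /is_XsumE fs /is_XsumE ft.
by rewrite -(is_series_unique _ _ fs) -(is_series_unique _ _ ft).
Qed.

Lemma is_Xsum_plus {f g s t} : is_Xsum f s -> is_Xsum g t -> is_Xsum (fun x => f x + g x) (s + t).
Proof.
move=> /is_XsumE fs /is_XsumE gt; apply/is_XsumE.
by apply: is_series_ext (is_series_plus _ _ _ _ fs gt) => -[|k] /=; rewrite Rsum_plus.
Qed.

Lemma is_Xsum_scal {a f s} : is_Xsum f s -> is_Xsum (fun x => a * f x) (a * s).
Proof.
move=> /is_XsumE fs; apply/is_XsumE.
by apply: is_series_ext (is_series_scal a _ _ fs) => -[|k] /=; rewrite Rsum_scal.
Qed.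

Lemma is_Xsum_minus {f g s t} : is_Xsum f s -> is_Xsum g t -> is_Xsum (fun x => f x - g x) (s - t).
Proof.
by move=> fs gt; apply: (is_Xsum_eq (is_Xsum_plus fs (is_Xsum_scal (a := -1) gt))) => *; ring.
Qed.

Lemma is_Xsum_zero : is_Xsum (fun _ => 0) 0.
Proof. by apply/is_XsumE; apply: is_series_zero => -[|k]; apply: Rsum0. Qed.

Lemma is_Xsum_ge_term {f s} x : (forall x, 0 <= f x) -> is_Xsum f s -> f x <= s.
Proof.
move=> f0 /is_XsumE fs; apply: Rle_trans (le_level x f0) _.
by apply: term_le_is_series fs => k; apply: level_ge0.
Qed.

Lemma is_Xsum_ge0 {f s} : (forall x, 0 <= f x) -> is_Xsum f s -> 0 <= s.
Proof. by move=> f0 /is_XsumE fs; apply: is_series_ge0 fs => k; apply: level_ge0. Qed.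

Lemma is_Xsum_abs {f t} : is_Xsum (fun x => Rabs (f x)) t -> exists s, is_Xsum f s /\ Rabs s <= t.
Proof.
move=> /is_XsumE ft.
have le_abs k : Rabs (level f k) <= level (fun x => Rabs (f x)) k by case: k => *; apply: Rsum_abs.
have ex_abs : ex_series (fun k => Rabs (level f k)).
  apply: (ex_series_le _ (level (fun x => Rabs (f x)))); last by exists t.
  by move=> k; rewrite /norm /= /abs /= Rabs_Rabsolu.
exists (Series (level f)); split.
  by apply/is_XsumE; apply: Series_correct; apply: ex_series_Rabs.
apply: Rle_trans (Series_Rabs _ ex_abs) _; rewrite -(is_series_unique _ _ ft).
by apply: Series_le; [move=> k; split; [exact: Rabs_pos | exact: le_abs] | exists t].
Qed.

Lemma is_Xsum_le {f g t} : (forall x, 0 <= f x <= g x) -> is_Xsum g t -> exists s, is_Xsum f s.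
Proof.
move=> fg /is_XsumE gt.
have ex_f : ex_series (level f).
  apply: (ex_series_le _ (level g)); last by exists t.
  move=> k; rewrite /norm /= /abs /= Rabs_pos_eq; last by apply: level_ge0 => x; case: (fg x).
  by case: k => [|k] /=; apply: Rsum_le => i; [case: (fg (inl i)) | case: (fg (inr (k, i)))].
by exists (Series (level f)); apply/is_XsumE; apply: Series_correct.
Qed.

Definition Xsum_val f : R :=
  Rsum (fun v => f (inl v)) + Series (fun m => Rsum (fun b => f (inr (m, b)))).

Lemma Xsum_valE {f s} : is_Xsum f s -> Xsum_val f = s.
Proof. by move=> fs; rewrite /Xsum_val (is_series_unique _ _ fs); ring. Qed.

Lemma is_Xsum_swap {T : X -> X -> R} {o : X -> R} {S} :
  (forall x y, 0 <= T x y) -> (forall x, is_Xsum (T x) (o x)) -> is_Xsum o S ->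
  exists i : X -> R, (forall y, is_Xsum (T^~ y) (i y)) /\ is_Xsum i S.
Proof.
move=> T0 To /is_XsumE oS.
pose a l k := level (fun x => level (T x) k) l.
have a_o l : is_series (a l) (level o l).
  by apply: (is_series_level (F := fun x k => level (T x) k)) => x; apply/is_XsumE.
have a0 l k : 0 <= a l k by apply: level_ge0 => x; apply: level_ge0.
have [ex_col col_S] := is_series_swap a0 a_o oS.
have ex_y y : ex_series (level (T^~ y)).
  apply: (ex_series_le _ (fun l => a l (level_of y))); last exact: ex_col.
  move=> l; rewrite /norm /= /abs /= Rabs_pos_eq; last exact: level_ge0.
  rewrite /a level_swap.
  by apply: (le_level (f := fun y => level (T^~ y) l)) => y'; apply: level_ge0.
exists (fun y => Series (level (T^~ y))); split=> [y|].
  by apply/is_XsumE; apply: Series_correct.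
apply/is_XsumE; apply: is_series_ext col_S => k.
rewrite -(is_series_unique _ _ (is_series_level k (fun y => Series_correct _ (ex_y y)))).
by apply: Series_ext => l; rewrite /a level_swap.
Qed.

End StateSums.

(** * Balanced measures *)

Section BalancedMeasures.
Context {V : finType} {c : nat}.
Local Notation X := (V + W c)%type.
Variables (rr : X -> X -> R) (out : X -> R).
Hypothesis rr_ge0 : forall x y, 0 <= rr x y.
Hypothesis is_Xsum_out : forall x, is_Xsum (rr x) (out x).
Hypothesis out_bounded : exists B, forall x, out x <= B.
Implicit Types (mu nu : X -> R).

Definition summable mu : Prop := exists t, is_Xsum (fun x => Rabs (mu x)) t.

Definition balance mu (y : X) : Prop := is_Xsum (fun x => mu x * rr x y) (mu y * out y).

Lemma out_ge0 x : 0 <= out x.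
Proof. exact: is_Xsum_ge0 (rr_ge0 x) (is_Xsum_out x). Qed.

Lemma summable_le {mu nu} : summable mu -> (forall x, Rabs (nu x) <= Rabs (mu x)) -> summable nu.
Proof.
by move=> [t mut] numu; apply: is_Xsum_le mut => x; split; [apply: Rabs_pos | apply: numu].
Qed.

Lemma summable_scal a {mu} : summable mu -> summable (fun x => a * mu x).
Proof.
move=> [t mut]; exists (Rabs a * t).
by apply: (is_Xsum_eq (is_Xsum_scal (a := Rabs a) mut)) => // x; rewrite Rabs_mult.
Qed.

Lemma summable_plus {mu nu} : summable mu -> summable nu -> summable (fun x => mu x + nu x).
Proof.
move=> [t mut] [u nuu].
by apply: is_Xsum_le (is_Xsum_plus mut nuu) => x; split; [apply: Rabs_pos | apply: Rabs_triang].
Qed.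

Lemma summable_is_Xsum {mu} : summable mu -> exists s, is_Xsum mu s.
Proof. by move=> [t mut]; have [s [mus _]] := is_Xsum_abs mut; exists s. Qed.

Lemma balance_scal {a mu y} : balance mu y -> balance (fun x => a * mu x) y.
Proof. by move=> bal; apply: (is_Xsum_eq (is_Xsum_scal (a := a) bal)) => *; ring. Qed.

Lemma balance_plus {mu nu y} : balance mu y -> balance nu y -> balance (fun x => mu x + nu x) y.
Proof. by move=> bmu bnu; apply: (is_Xsum_eq (is_Xsum_plus bmu bnu)) => *; ring. Qed.

(* Boundedness of [out] makes the total outflow of a summable measure finite. *)
Lemma inflow_nonneg {nu} : (forall x, 0 <= nu x) -> summable nu ->
  exists (i : X -> R) S, (forall y, is_Xsum (fun x => nu x * rr x y) (i y)) /\
    is_Xsum i S /\ is_Xsum (fun x => nu x * out x) S.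
Proof.
move=> nu0 [t nut]; have [B outB] := out_bounded.
have [S nuS] : exists S, is_Xsum (fun x => nu x * out x) S.
  apply: (is_Xsum_le (g := fun x => B * Rabs (nu x))) (is_Xsum_scal nut) => x.
  rewrite Rabs_pos_eq // [B * _]Rmult_comm.
  by split; [apply: Rmult_le_pos (nu0 x) (out_ge0 x) | apply: Rmult_le_compat_l].
have [i [iy iS]] := is_Xsum_swap (T := fun x y => nu x * rr x y)
  (fun x y => Rmult_le_pos _ _ (nu0 x) (rr_ge0 x y)) (fun x => is_Xsum_scal (is_Xsum_out x)) nuS.
by exists i, S.
Qed.

Lemma inflow {mu} : summable mu ->
  exists (i : X -> R) S, (forall y, is_Xsum (fun x => mu x * rr x y) (i y)) /\
    is_Xsum i S /\ is_Xsum (fun x => mu x * out x) S.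
Proof.
move=> smu; pose mp x := (Rabs (mu x) + mu x) / 2; pose mn x := (Rabs (mu x) - mu x) / 2.
have parts x : 0 <= mp x <= Rabs (mu x) /\ 0 <= mn x <= Rabs (mu x).
  by rewrite /mp /mn; move: (Rle_abs (mu x)) (Rle_abs (- mu x)); rewrite Rabs_Ropp; lra.
have mp0 x : 0 <= mp x by case: (parts x) => -[].
have mn0 x : 0 <= mn x by case: (parts x) => _ [].
have smp : summable mp.
  apply: (summable_le (nu := mp) smu) => x; rewrite Rabs_pos_eq //; by case: (parts x) => -[].
have smn : summable mn.
  apply: (summable_le (nu := mn) smu) => x; rewrite Rabs_pos_eq //; by case: (parts x) => _ [].
have [ip [Sp [ipy [ipS mpS]]]] := inflow_nonneg mp0 smp.
have [iN [Sn [iny [inS mnS]]]] := inflow_nonneg mn0 smn.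
exists (fun y => ip y - iN y), (Sp - Sn); split; [|split].
- by move=> y; apply: (is_Xsum_eq (is_Xsum_minus (ipy y) (iny y))) => // x; rewrite /mp /mn; field.
- exact: is_Xsum_minus.
- by apply: (is_Xsum_eq (is_Xsum_minus mpS mnS)) => // x; rewrite /mp /mn; field.
Qed.

Lemma is_Xsum0_supported {d : X -> R} {y0} :
  is_Xsum d 0 -> (forall y, y <> y0 -> d y = 0) -> d y0 = 0.
Proof.
move=> d0 dy; pose sg := if Rle_dec 0 (d y0) then 1 else -1.
have sg_d y : 0 <= sg * d y.
  case: (eqVneq y y0) => [->|/eqP/dy ->]; last by rewrite Rmult_0_r; apply: Rle_refl.
  by rewrite /sg; case: Rle_dec => h /=; lra.
have := is_Xsum_ge_term y0 sg_d (is_Xsum_scal (a := sg) d0).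
by move: (sg_d y0); rewrite /sg; case: Rle_dec => h /= *; lra.
Qed.

(* Summing all balance equations gives an identity, so any one of them follows from the others. *)
Lemma balance_from_others {mu y0} :
  summable mu -> (forall y, y <> y0 -> balance mu y) -> balance mu y0.
Proof.
move=> smu bal; have [i [S [iy [iS muS]]]] := inflow smu.
pose d y := mu y * out y - i y.
have d0 : d y0 = 0.
  apply: is_Xsum0_supported (is_Xsum_eq (is_Xsum_minus muS iS) _ _) _ => // [|y ne].
    by rewrite Rminus_diag.
  by rewrite /d (is_Xsum_unique (iy y) (bal y ne)) Rminus_diag.
by apply: (is_Xsum_eq (iy y0)) => //; rewrite /d in d0; lra.
Qed.

Definition residual mu y : R := mu y * out y - Xsum_val (fun x => mu x * rr x y).

Lemma balanceE {mu} y : summable mu -> balance mu y <-> residual mu y = 0.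
Proof.
move=> smu; have [i [S [iy _]]] := inflow smu.
rewrite /residual (Xsum_valE (iy y)); split=> [bal|/Rminus_diag_uniq E].
  by rewrite (is_Xsum_unique (iy y) bal) Rminus_diag.
exact: is_Xsum_eq (iy y) (esym E) (fun _ => erefl).
Qed.

Definition linear_on_summable (E : (X -> R) -> R) : Prop :=
  forall a b mu nu, summable mu -> summable nu ->
    E (fun x => a * mu x + b * nu x) = a * E mu + b * E nu.

Lemma Xsum_val_linear : linear_on_summable Xsum_val.
Proof.
move=> a b mu nu /summable_is_Xsum [s mus] /summable_is_Xsum [t nut].
rewrite (Xsum_valE mus) (Xsum_valE nut).
exact: Xsum_valE (is_Xsum_plus (is_Xsum_scal mus) (is_Xsum_scal nut)).
Qed.

Lemma residual_linear y : linear_on_summable (residual^~ y).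
Proof.
move=> a b mu nu smu snu.
have [i [_ [iy _]]] := inflow smu; have [j [_ [jy _]]] := inflow snu.
have ijy := is_Xsum_plus (is_Xsum_scal (a := a) (iy y)) (is_Xsum_scal (a := b) (jy y)).
rewrite /residual (Xsum_valE (iy y)) (Xsum_valE (jy y)).
have ijy' : is_Xsum (fun x => (a * mu x + b * nu x) * rr x y) (a * i y + b * j y).
  by apply: is_Xsum_eq ijy erefl _ => x; ring.
by rewrite (Xsum_valE ijy'); ring.
Qed.

Lemma balance_abs {mu} : summable mu -> (forall y, balance mu y) ->
  forall y, balance (fun x => Rabs (mu x)) y.
Proof.
move=> smu bal.
have [//|i [S [iy [iS muS]]]] := inflow_nonneg (fun x => Rabs_pos (mu x)) (summable_le smu _).
  by move=> x; rewrite Rabs_Rabsolu; apply: Rle_refl.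
have le_i y : Rabs (mu y) * out y <= i y.
  have absy : is_Xsum (fun x => Rabs (mu x * rr x y)) (i y).
    by apply: is_Xsum_ext (iy y) => x; rewrite Rabs_mult (Rabs_pos_eq (rr x y)).
  have [s [s_i le_s]] := is_Xsum_abs absy.
  by rewrite (is_Xsum_unique s_i (bal y)) Rabs_mult (Rabs_pos_eq _ (out_ge0 y)) in le_s.
have i_eq y : i y = Rabs (mu y) * out y.
  have d0 x : 0 <= i x - Rabs (mu x) * out x by move: (le_i x); lra.
  by move: (is_Xsum_ge_term y d0 (is_Xsum_minus iS muS)) (le_i y); rewrite Rminus_diag; lra.
by move=> y; rewrite /balance -i_eq.
Qed.

Lemma balance_pos_step {mu x y} : summable mu -> (forall y, balance mu y) ->
  0 < rr x y -> 0 < mu x -> 0 < mu y.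
Proof.
move=> smu bal rxy mux; case: (Rlt_le_dec 0 (mu y)) => // muy; exfalso.
pose g x' := (Rabs (mu x') + mu x') * rr x' y.
have g0 x' : 0 <= g x'.
  by apply: Rmult_le_pos => //; move: (Rle_abs (- mu x')); rewrite Rabs_Ropp; lra.
have gS : is_Xsum g (Rabs (mu y) * out y + mu y * out y).
  apply: (is_Xsum_eq (is_Xsum_plus (balance_abs smu bal y) (bal y))) => // x'.
  by rewrite /g Rmult_plus_distr_r.
have := is_Xsum_ge_term x g0 gS.
rewrite /g (Rabs_pos_eq _ (Rlt_le _ _ mux)) (Rabs_left1 _ muy).
have : 0 < (mu x + mu x) * rr x y by apply: Rmult_lt_0_compat; lra.
by move: (out_ge0 y); nra.
Qed.

Hypothesis rr_irreducible :
  forall x y : X, clos_refl_trans _ (fun x y => x <> y /\ 0 < rr x y) x y.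

Lemma balance_pos {mu x0} : summable mu -> (forall y, balance mu y) -> 0 < mu x0 ->
  forall y, 0 < mu y.
Proof.
move=> smu bal mu0 y; elim: (rr_irreducible x0 y) mu0 => [a b [_ rab]|//|a b d _ IH1 _ IH2].
  exact: balance_pos_step.
by move/IH1/IH2.
Qed.

Lemma balance_mass0 {mu} : summable mu -> (forall y, balance mu y) -> is_Xsum mu 0 ->
  forall x, mu x = 0.
Proof.
have le0 nu : summable nu -> (forall y, balance nu y) -> is_Xsum nu 0 -> forall x, nu x <= 0.
  move=> snu bal nu0 x; case: (Rle_lt_dec (nu x) 0) => // /(balance_pos snu bal) pos.
  have := is_Xsum_ge_term x (fun y => Rlt_le _ _ (pos y)) nu0; move: (pos x); lra.
move=> smu bal mu0 x; move: (le0 _ smu bal mu0 x).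
have := le0 _ (summable_scal (-1) smu) (fun y => balance_scal (a := -1) (bal y))
  (is_Xsum_eq (is_Xsum_scal (a := -1) mu0) (Rmult_0_r _) (fun _ => erefl)) x.
lra.
Qed.

End BalancedMeasures.

(** * Complex numbers *)

Lemma Cplus_assoc' : associative Cplus. Proof. by move=> x y z; rewrite Cplus_assoc. Qed.
HB.instance Definition _ :=
  Monoid.isComLaw.Build C (RtoC 0) Cplus Cplus_assoc' Cplus_comm Cplus_0_l.
Lemma Cmult_assoc' : associative Cmult. Proof. by move=> x y z; rewrite Cmult_assoc. Qed.
HB.instance Definition _ :=
  Monoid.isComLaw.Build C (RtoC 1) Cmult Cmult_assoc' Cmult_comm Cmult_1_l.
HB.instance Definition _ := Monoid.isMulLaw.Build C (RtoC 0) Cmult Cmult_0_l Cmult_0_r.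
HB.instance Definition _ :=
  Monoid.isAddLaw.Build C Cmult Cplus Cmult_plus_distr_r Cmult_plus_distr_l.

(* MathComp's linear algebra needs [C] as a [fieldType]; equality and choice are classical. *)
HB.instance Definition _ := boolp.gen_eqMixin C.
HB.instance Definition _ := boolp.gen_choiceMixin C.
Lemma Cplus_opp_l : left_inverse (RtoC 0) Copp Cplus.
Proof. by move=> x; rewrite Cplus_comm Cplus_opp_r. Qed.
HB.instance Definition _ := GRing.isZmodule.Build C Cplus_assoc' Cplus_comm Cplus_0_l Cplus_opp_l.
Lemma C1_neq0 : RtoC 1 != RtoC 0. Proof. exact/eqP/C1_nz. Qed.
HB.instance Definition _ :=
  GRing.Zmodule_isComNzRing.Build C Cmult_assoc' Cmult_comm Cmult_1_l Cmult_plus_distr_r C1_neq0.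
Lemma Cinv_l' (x : C) : x != 0%R -> Cmult (Cinv x) x = 1%R.
Proof. by move=> /eqP; apply: Cinv_l. Qed.
Lemma Cinv_0 : Cinv (RtoC 0) = RtoC 0.
Proof. by rewrite /Cinv /= /RtoC /=; f_equal; rewrite /Rdiv; ring. Qed.
HB.instance Definition _ := GRing.ComNzRing_isField.Build C Cinv_l' Cinv_0.

Section SquareSystems.
Local Open Scope ring_scope.
Import GRing.Theory.

Lemma square_system_solvable (F : fieldType) (I J : finType) (A : I -> J -> F) : #|I| = #|J| ->
  (forall x : I -> F, (forall j, \sum_i x i * A i j = 0) -> forall i, x i = 0) ->
  forall b : J -> F, exists x : I -> F, forall j, \sum_i x i * A i j = b j.
Proof.
move=> IJ A_inj b.
pose cJ (l : 'I_#|I|) : J := enum_val (cast_ord IJ l).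
pose rJ (j : J) : 'I_#|I| := cast_ord (esym IJ) (enum_rank j).
have cJK j : cJ (rJ j) = j by rewrite /cJ /rJ cast_ordKV enum_rankK.
pose M : 'M[F]_#|I| := \matrix_(k, l) A (enum_val k) (cJ l).
have mulM (v : 'rV[F]_#|I|) j : (v *m M) ord0 (rJ j) = \sum_i v ord0 (enum_rank i) * A i j.
  rewrite !mxE [RHS](reindex (@enum_val I predT)) /=; last exact/onW_bij/enum_val_bij.
  by apply: eq_bigr => k _; rewrite mxE cJK enum_valK.
have : M \in unitmx.
  rewrite -row_free_unit; apply/inj_row_free => v vM0; apply/rowP => k; rewrite mxE.
  rewrite -(enum_valK k); apply: (A_inj (fun i => v ord0 (enum_rank i))) => j.
  by rewrite -mulM vM0 mxE.
move=> M_unit; pose u : 'rV[F]_#|I| := \row_l b (cJ l).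
exists (fun i => (u *m invmx M) ord0 (enum_rank i)) => j.
by rewrite -mulM mulmxKV // mxE cJK.
Qed.

End SquareSystems.

Lemma square_system_solvable_C (I J : finType) (A : I -> J -> C) : #|I| = #|J| ->
  (forall x : I -> C, (forall j, Csum (fun i => Cmult (x i) (A i j)) = RtoC 0) ->
     forall i, x i = RtoC 0) ->
  forall b : J -> C, exists x : I -> C, forall j, Csum (fun i => Cmult (x i) (A i j)) = b j.
Proof. exact: square_system_solvable. Qed.

Section ComplexParts.

(* Indexing the real and imaginary parts by a boolean lets one statement cover both. *)
Definition Cpart (b : bool) (z : C) : R := if b then Re z else Im z.

Lemma C_eq_parts z w : (forall b, Cpart b z = Cpart b w) -> z = w.
Proof. by case: z w => [x y] [x' y'] parts; move: (parts true) (parts false) => /= -> ->. Qed.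

Lemma Cpart_plus b z w : Cpart b (Cplus z w) = Cpart b z + Cpart b w.
Proof. by case: b. Qed.

Lemma Cpart_minus b z w : Cpart b (Cminus z w) = Cpart b z - Cpart b w.
Proof. by case: b. Qed.

Lemma Cpart_mulR b z r : Cpart b (Cmult z (RtoC r)) = Cpart b z * r.
Proof. by case: b; rewrite /= /Re /Im /=; ring. Qed.

Lemma Cpart_Rmul b r z : Cpart b (Cmult (RtoC r) z) = r * Cpart b z.
Proof. by case: b; rewrite /= /Re /Im /=; ring. Qed.

Lemma Cpart_mul b a z :
  Cpart b (Cmult a z) = Re a * Cpart b z + (if b then - Im a else Im a) * Cpart (~~ b) z.
Proof. by case: b; rewrite /= /Re /Im /=; ring. Qed.

Lemma Cpart_RtoC b r : Cpart b (RtoC r) = if b then r else 0.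
Proof. by case: b. Qed.

Lemma Cpart_Csum b {I : finType} (F : I -> C) : Cpart b (Csum F) = Rsum (fun i => Cpart b (F i)).
Proof. by rewrite /Csum /Rsum; elim/big_rec2: _ => [|i x y _ <-]; case: b. Qed.

Lemma Cpart_le_Cmod b z : Rabs (Cpart b z) <= Cmod z.
Proof. by case: b; [apply: re_le_Cmod | apply: Rle_trans (Rmax_r _ _) (Rmax_Cmod z)]. Qed.

Lemma is_series_Cpart b (a : nat -> C) l :
  is_series a l -> is_series (fun n => Cpart b (a n)) (Cpart b l).
Proof.
have sum_n_Cpart n : sum_n (fun k => Cpart b (a k)) n = Cpart b (sum_n a n).
  by elim: n => [|n IH]; rewrite ?sum_O // !sum_Sn IH; case: (b) => /=.
move=> al; apply/(filterlim_locally (F := eventually)) => eps.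
apply: filter_imp (proj1 (filterlim_locally _ _) al eps) => n [re im] /=.
by rewrite sum_n_Cpart; case: (b).
Qed.

Lemma is_series_C0 : is_series (fun _ => RtoC 0) (RtoC 0).
Proof.
apply: (filterlim_ext (fun _ => RtoC 0)); last exact: filterlim_const.
by elim=> [|n IH]; rewrite ?sum_O // sum_Sn -IH /plus /= Cplus_0_r.
Qed.

Lemma Cmod_Csum {I : finType} (F : I -> C) : Cmod (Csum F) <= Rsum (fun i => Cmod (F i)).
Proof.
rewrite /Csum /Rsum; elim/big_rec2: _ => [|i y1 y2 _ le_y].
  by rewrite Cmod_0; apply: Rle_refl.
by apply: Rle_trans (Cmod_triangle _ _) _; apply: Rplus_le_compat_l.
Qed.

End ComplexParts.

Section ComplexMeasures.
Context {V : finType} {c : nat}.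
Local Notation X := (V + W c)%type.
Implicit Types (phi psi : X -> C).

Definition csummable phi : Prop := summable (fun x => Cmod (phi x)).

Lemma csummable_part b {phi} : csummable phi -> summable (fun x => Cpart b (phi x)).
Proof.
by move/summable_le; apply=> x; rewrite (Rabs_pos_eq _ (Cmod_ge_0 _)); apply: Cpart_le_Cmod.
Qed.

Lemma csummable_comb a {phi psi} : csummable phi -> csummable psi ->
  csummable (fun x => Cplus (Cmult a (phi x)) (psi x)).
Proof.
move=> sphi spsi; apply: summable_le (summable_plus (summable_scal (Cmod a) sphi) spsi) _ => x.
rewrite (Rabs_pos_eq _ (Cmod_ge_0 _)); apply: Rle_trans _ (Rle_abs _).
by rewrite -Cmod_mult; apply: Cmod_triangle.
Qed.

Lemma csummable0 : csummable (fun _ => RtoC 0).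
Proof. by exists 0; apply: is_Xsum_ext is_Xsum_zero => x; rewrite Cmod_0 Rabs_R0. Qed.

Lemma csummable_big {I : Type} (r : seq I) (a : I -> C) (phis : I -> X -> C) :
  (forall u, csummable (phis u)) ->
  csummable (fun x => \big[Cplus/RtoC 0]_(u <- r) Cmult (a u) (phis u x)).
Proof.
move=> sphis; elim: r => [|u r IH].
  by apply: summable_le csummable0 _ => x; rewrite big_nil; apply: Rle_refl.
by apply: summable_le (csummable_comb (a u) (sphis u) IH) _ => x; rewrite big_cons; apply: Rle_refl.
Qed.

Definition Cext (E : (X -> R) -> R) phi : C :=
  (E (fun x => Cpart true (phi x)), E (fun x => Cpart false (phi x))).

Lemma Cpart_Cext b E phi : Cpart b (Cext E phi) = E (fun x => Cpart b (phi x)).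
Proof. by case: b. Qed.

Lemma Cext_comb {E} a {phi psi} : linear_on_summable E -> csummable phi -> csummable psi ->
  Cext E (fun x => Cplus (Cmult a (phi x)) (psi x)) = Cplus (Cmult a (Cext E phi)) (Cext E psi).
Proof.
move=> linE sphi spsi; apply: C_eq_parts => b.
rewrite Cpart_Cext Cpart_plus Cpart_mul !Cpart_Cext; set sg := (if b then _ else _).
have -> : (fun x => Cpart b (Cplus (Cmult a (phi x)) (psi x))) =
    (fun x => 1 * (Re a * Cpart b (phi x) + sg * Cpart (~~ b) (phi x)) + 1 * Cpart b (psi x)).
  by apply: functional_extensionality => x; rewrite Cpart_plus Cpart_mul -/sg; ring.
have [sb snb] := (csummable_part b sphi, csummable_part (~~ b) sphi).
rewrite linE ?linE //; first ring.
- by apply: summable_le (summable_plus (summable_scal (Re a) sb) (summable_scal sg snb)) _ => x;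
    apply: Rle_refl.
- exact: csummable_part.
Qed.

Lemma Cext0 {E} : linear_on_summable E -> Cext E (fun _ => RtoC 0) = RtoC 0.
Proof.
move=> linE; apply: C_eq_parts => b; rewrite Cpart_Cext Cpart_RtoC.
have s0 : summable (fun x : X => Cpart b (RtoC 0)) by apply: csummable_part csummable0.
have := linE 0 0 _ _ s0 s0.
have -> : (fun x => 0 * Cpart b (RtoC 0) + 0 * Cpart b (RtoC 0)) = (fun _ : X => Cpart b (RtoC 0)).
  by apply: functional_extensionality => x; case: (b) => /=; ring.
by case: (b) => ->; ring.
Qed.

Lemma Cext_big E {I : Type} (r : seq I) (a : I -> C) (phis : I -> X -> C) :
  linear_on_summable E -> (forall u, csummable (phis u)) ->
  Cext E (fun x => \big[Cplus/RtoC 0]_(u <- r) Cmult (a u) (phis u x)) =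
  \big[Cplus/RtoC 0]_(u <- r) Cmult (a u) (Cext E (phis u)).
Proof.
move=> linE sphis; elim: r => [|u r IH].
  rewrite big_nil -[RHS](Cext0 linE); congr Cext.
  by apply: functional_extensionality => x; rewrite big_nil.
rewrite big_cons -IH -Cext_comb //; last exact: csummable_big.
by congr Cext; apply: functional_extensionality => x; rewrite big_cons.
Qed.

End ComplexMeasures.

(** * The process *)

Section Bits.
Context {c : nat}.
Implicit Types (f b : {ffun 'I_c -> bool}) (i : 'I_c).

Lemma setbit_at f i x : setbit f i x i = x.
Proof. by rewrite /setbit ffunE eqxx. Qed.

Lemma setbit_id f i : setbit f i (f i) = f.
Proof. by apply/ffunP => j; rewrite /setbit ffunE; case: eqP => [->|]. Qed.

Lemma setbit_true_neq_false f i : setbit f i true != setbit f i false.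
Proof.
by apply/eqP => /(congr1 (fun g : {ffun _ -> bool} => g i)); rewrite !setbit_at.
Qed.

Lemma agree_off_setbit f i b :
  [forall j, (j != i) ==> (b j == f j)] = (b == setbit f i true) || (b == setbit f i false).
Proof.
apply/idP/idP => [/forallP agree|].
  have -> : b = setbit f i (b i).
    apply/ffunP => j; rewrite /setbit ffunE; case: eqP => [->//|/eqP ne].
    by move: (agree j); rewrite ne => /eqP.
  by case: (b i); rewrite eqxx ?orbT.
by case/orP => /eqP ->; apply/forallP => j; apply/implyP => ne; rewrite /setbit ffunE (negbTE ne).
Qed.

Lemma Rsum_two {P : pred {ffun 'I_c -> bool}} (F : {ffun 'I_c -> bool} -> R) {b1 b2} :
  b1 != b2 -> (forall b, P b = (b == b1) || (b == b2)) ->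
  Rsum (fun b => if P b then F b else 0) = F b1 + F b2.
Proof.
move=> ne P12; rewrite /Rsum (bigD1 b1) //= P12 eqxx (bigD1 b2) /= 1?eq_sym //.
rewrite P12 eqxx orbT big1 ?Rplus_0_r // => b /andP [ne1 ne2].
by rewrite P12 (negbTE ne1) (negbTE ne2).
Qed.

End Bits.

Section Model.
Context {c K : nat} {V : finType} {M : model c K V}.
Hypothesis hM : model_ok M.
Local Notation X := (V + W c)%type.

Definition outX (x : X) : R := match x with inl v => outV M v | inr n => outW M n end.

Lemma rate_i_ge0 i k b b' : (k <= Z.of_nat K)%Z -> 0 <= rate_i M i k b b'.
Proof. by case: hM => rates0 _ /(rates0 i) [? [? [? ?]]]; case: b; case: b'. Qed.

Lemma rateWW_ge0 n m : 0 <= rateWW M n m.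
Proof.
apply: Rsum_ge0 => i /=; case: ifP => _; last exact: Rle_refl.
by case: Z.leb_spec => k; [apply: rate_i_ge0 | apply: Rle_refl].
Qed.

Lemma rate_ge0 x y : 0 <= rate M x y.
Proof.
case: hM => _ [_ [QVV0 [QVW0 [QWV0 _]]]].
by case: x => [v|n]; case: y => [v'|m] /=; auto; apply: rateWW_ge0.
Qed.

Lemma Rsum_rateWW_level (n : W c) m : Rsum (fun b => rateWW M n (m, b)) =
  if (Z.of_nat m - Z.of_nat n.1 <=? Z.of_nat K)%Z
  then Rsum (fun i => rtot M i (Z.of_nat m - Z.of_nat n.1) (n.2 i)) else 0.
Proof.
rewrite /rateWW /Rsum exchange_big /=; case: (_ <=? _)%Z; last first.
  by apply: big1 => i _; apply: big1 => b _; case: ifP.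
apply: eq_bigr => i _.
rewrite /rtot -[in RHS](setbit_at n.2 i true) -[in RHS](setbit_at n.2 i false).
exact: (Rsum_two (fun b => rate_i M i _ (n.2 i) (b i))
  (setbit_true_neq_false _ _) (agree_off_setbit _ _)).
Qed.

Definition inner_term (mu : W c -> R) (f : {ffun 'I_c -> bool}) (m0 : nat) (k : Z) (i : 'I_c) : R :=
  if f i then ra M i k * mu (m0, setbit f i false) + rc M i k * mu (m0, f)
  else rb M i k * mu (m0, f) + rd M i k * mu (m0, setbit f i true).

Lemma Rsum_inflow_level (mu : W c -> R) (n : W c) m :
  Rsum (fun b => mu (m, b) * rateWW M (m, b) n) =
  if (Z.of_nat n.1 - Z.of_nat m <=? Z.of_nat K)%Z
  then Rsum (inner_term mu n.2 m (Z.of_nat n.1 - Z.of_nat m)) else 0.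
Proof.
rewrite /rateWW /Rsum; under eq_bigr => b _ do rewrite big_distrr /=.
rewrite exchange_big /=; case: (_ <=? _)%Z; last first.
  by apply: big1 => i _; apply: big1 => b _; case: ifP => _; ring.
apply: eq_bigr => i _; set k := (_ - _)%Z.
have agree (b : {ffun 'I_c -> bool}) : [forall j, (j != i) ==> (n.2 j == b j)] =
    (b == setbit n.2 i true) || (b == setbit n.2 i false).
  by rewrite -agree_off_setbit; apply: eq_forallb => j; rewrite [n.2 j == _]eq_sym.
transitivity (Rsum (fun b : {ffun 'I_c -> bool} => if [forall j, (j != i) ==> (n.2 j == b j)]
    then mu (m, b) * rate_i M i k (b i) (n.2 i) else 0)).
  by apply: eq_bigr => b _; case: ifP => _; ring.
rewrite (Rsum_two (fun b => mu (m, b) * rate_i M i k (b i) (n.2 i))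
  (setbit_true_neq_false _ _) agree).
rewrite /inner_term !setbit_at; have := setbit_id n.2 i.
by case: (n.2 i) => -> /=; ring.
Qed.

Lemma ex_series_rtot (f : {ffun 'I_c -> bool}) :
  ex_series (fun j => Rsum (fun i => rtot M i (Z.of_nat K - Z.of_nat j) (f i))).
Proof.
case: hM => _ [rates_ex _].
exists (Rsum (fun i => Series (fun j => rtot M i (Z.of_nat K - Z.of_nat j) (f i)))).
apply: is_series_Rsum => i; apply: Series_correct.
have [[la a_] [[lb b_] [[lc c_] [ld d_]]]] := rates_ex i.
rewrite /rtot; case: (f i) => /=.
- by exists (lc + ld); apply: is_series_plus c_ d_.
- by exists (la + lb); apply: is_series_plus a_ b_.
Qed.

(* The outflow from [n] is the series of the rates of all jumps from [n], indexed by [K - k]: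
   the jumps inside W give its first [n_0 + K + 1] terms, the jumps into V its tail. *)
Lemma outW_series (n : W c) :
  outW M n = Series (fun j => Rsum (fun i => rtot M i (Z.of_nat K - Z.of_nat j) (n.2 i))).
Proof.
case: hM => _ [_ [_ [_ [_ [_ [QWV_rate _]]]]]].
set H := fun j => Rsum _; pose N := (n.1 + K)%nat.
set G := fun m => Rsum (fun b => rateWW M n (m, b)).
have G_N m : (N < m)%nat -> G m = 0.
  by move=> mN; rewrite /G Rsum_rateWW_level; case: Z.leb_spec => //; lia.
have GH : sum_n G N = sum_n H N.
  rewrite -[RHS]sum_n_rev; apply: sum_n_ext_loc => m mN.
  rewrite /G Rsum_rateWW_level; case: Z.leb_spec => [_|]; last lia.
  by apply: Rsum_ext => i; congr rtot; lia.
have H_tail : is_series (fun k => H (N.+1 + k)%nat) (Series H - sum_n H N).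
  apply: (@is_series_incr_n _ _ H N.+1); first lia.
  rewrite /plus /= Rplus_comm Rplus_minus; exact: Series_correct (ex_series_rtot _).
rewrite /outW -/G (is_series_unique _ _ (is_series_finite_support G_N)) GH.
suff -> : Rsum (fun v => QWV M n v) = Series H - sum_n H N by ring.
rewrite QWV_rate /rate_to_V; apply: is_series_unique; apply: is_series_ext H_tail => j.
by apply: Rsum_ext => i; congr rtot; lia.
Qed.

Lemma is_Xsum_rate x : is_Xsum (rate M x) (outX x).
Proof.
case: hM => _ [_ [_ [_ [_ [_ [_ QVW_ex]]]]]].
case: x => [v|n]; rewrite /is_Xsum /=.
  by rewrite /outV Rplus_minus_l; apply: Series_correct; apply: QVW_ex.
rewrite /outW Rplus_minus_r; apply: Series_correct.
exists (sum_n (fun m => Rsum (fun b => rateWW M n (m, b))) (n.1 + K)).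
apply: is_series_finite_support => m mN.
by rewrite Rsum_rateWW_level; case: Z.leb_spec => //; lia.
Qed.

Lemma outX_bounded : exists B, forall x, outX x <= B.
Proof.
pose U j := Rsum (fun i => rtot M i (Z.of_nat K - Z.of_nat j) true +
                           rtot M i (Z.of_nat K - Z.of_nat j) false).
have rtot0 i j b : 0 <= rtot M i (Z.of_nat K - Z.of_nat j) b.
  by apply: Rplus_le_le_0_compat; apply: rate_i_ge0; lia.
have exU : ex_series U.
  have [[t ht] [f hf]] := (ex_series_rtot [ffun => true], ex_series_rtot [ffun => false]).
  exists (t + f); apply: is_series_ext (is_series_plus _ _ _ _ ht hf) => j.
  by rewrite /U Rsum_plus; congr (_ + _); apply: Rsum_ext => i; rewrite ffunE.
have outV0 v : 0 <= outV M v.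
  exact: (is_Xsum_ge0 (f := rate M (inl v)) (rate_ge0 _) (is_Xsum_rate (inl v))).
have U0 : 0 <= Series U.
  apply: is_series_ge0 (Series_correct _ exU) => j.
  by apply: Rsum_ge0 => i; apply: Rplus_le_le_0_compat.
exists (Series U + Rsum (fun v => outV M v)) => -[v|n] /=.
  by move: (Rsum_term (f := fun v => outV M v) v outV0); lra.
have V0 : 0 <= Rsum (fun v => outV M v) by apply: Rsum_ge0.
suff : outW M n <= Series U by lra.
rewrite outW_series; apply: Series_le => // j; split; first by apply: Rsum_ge0.
apply: Rsum_le => i; move: (rtot0 i j true) (rtot0 i j false).
by case: (n.2 i); lra.
Qed.

Definition inner_eqR (mu : W c -> R) (n : W c) : Prop :=
  is_series (fun j => Rsum (inner_term mu n.2 (n.1 - K + j) (Z.of_nat K - Z.of_nat j)))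
    (Series (fun j => Rsum (fun i => rtot M i (Z.of_nat K - Z.of_nat j) (n.2 i))) * mu n).

(* Above level [K] no jump from V arrives, and the inflow series is the inner equation. *)
Lemma balance_high (mu : X -> R) (n : W c) : (K <= n.1)%nat -> inner_eqR (fun w => mu (inr w)) n ->
  balance (rate M) outX mu (inr n).
Proof.
case: hM => _ [_ [_ [_ [_ [QVW_high _]]]]] Kn inner.
rewrite /balance /is_Xsum /=.
rewrite (Rsum_ext (g := fun _ => 0)) ?Rsum0 => [|v]; last by rewrite QVW_high // Rmult_0_r.
rewrite Rminus_0_r outW_series Rmult_comm.
apply: (is_series_drop_zeros (N := (n.1 - K)%nat)) => [m mn|].
  by rewrite (Rsum_inflow_level (fun w => mu (inr w))); case: Z.leb_spec => //; lia.
apply: is_series_ext inner => j; rewrite (Rsum_inflow_level (fun w => mu (inr w))).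
case: Z.leb_spec => [_|]; last lia.
by congr Rsum; congr inner_term; lia.
Qed.

Definition state (qV : V -> C) (qW : W c -> C) (x : X) : C :=
  match x with inl v => qV v | inr n => qW n end.

(* [balanceV] and [balanceW] are instances of the hypothesis below. *)
Lemma balance_of_complex (phi : X -> C) y b :
  is_series (fun m => Csum (fun f => Cmult (phi (inr (m, f))) (RtoC (rate M (inr (m, f)) y))))
    (Cminus (Cmult (phi y) (RtoC (outX y)))
            (Csum (fun v => Cmult (phi (inl v)) (RtoC (rate M (inl v) y))))) ->
  balance (rate M) outX (fun x => Cpart b (phi x)) y.
Proof.
move=> /(is_series_Cpart b); rewrite Cpart_minus Cpart_mulR Cpart_Csum => bal.
rewrite /balance /is_Xsum -(Rsum_ext (fun v => Cpart_mulR b _ _)).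
by apply: is_series_ext bal => m; rewrite Cpart_Csum; apply: Rsum_ext => f; apply: Cpart_mulR.
Qed.

Lemma is_Xsum_of_normalized qV qW b :
  normalized qV qW -> is_Xsum (fun x => Cpart b (state qV qW x)) (Cpart b (RtoC 1)).
Proof.
move=> /(is_series_Cpart b); rewrite Cpart_minus Cpart_Csum => qs.
by apply: is_series_ext qs => m; apply: Cpart_Csum.
Qed.

Lemma csummable_state qV qW : abs_conv qW -> csummable (state qV qW).
Proof.
move=> [s qs]; exists (s + Rsum (fun v => Rabs (Cmod (qV v)))).
rewrite /is_Xsum Rplus_minus_r; apply: is_series_ext qs => m /=.
by apply: Rsum_ext => f; rewrite Rabs_pos_eq //; apply: Cmod_ge_0.
Qed.

Lemma inner_eq0 n : inner_eq M (fun _ => RtoC 0) n.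
Proof.
rewrite /inner_eq Cmult_0_r; apply: is_series_ext is_series_C0 => j.
by rewrite /Csum big1 // => i _; case: ifP => _; rewrite !Cmult_0_r Cplus_0_r.
Qed.

Lemma inner_eq_comb a {q q' n} : inner_eq M q n -> inner_eq M q' n ->
  inner_eq M (fun w => Cplus (Cmult a (q w)) (q' w)) n.
Proof.
move=> hq hq'; rewrite /inner_eq /=; set L := RtoC (Series _).
have := is_series_plus _ _ _ _ (is_series_scal a _ _ hq) hq'.
rewrite /plus /scal /= /mult /= -/L => h.
have -> : Cmult L (Cplus (Cmult a (q n)) (q' n)) = Cplus (Cmult a (Cmult L (q n))) (Cmult L (q' n)).
  by ring.
apply: is_series_ext h => j /=; rewrite /Csum big_distrr -big_split /=.
by apply: eq_bigr => i _; case: ifP => _; ring.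
Qed.

Lemma inner_eq_lin_comb {N} (al : 'I_N -> C) (ps : 'I_N -> W c -> C) n :
  (forall j, inner_eq M (ps j) n) -> inner_eq M (lin_comb al ps) n.
Proof.
move=> hps; rewrite /lin_comb /Csum; elim: (index_enum _) => [|j r IH].
  by have := inner_eq0 n; congr inner_eq; apply: functional_extensionality => w; rewrite big_nil.
have := inner_eq_comb (al j) (hps j) IH; congr inner_eq.
by apply: functional_extensionality => w; rewrite big_cons.
Qed.

Lemma inner_eq_part b q n : inner_eq M q n -> inner_eqR (fun w => Cpart b (q w)) n.
Proof.
move=> /(is_series_Cpart b); rewrite Cpart_Rmul => h.
apply: is_series_ext h => j; rewrite Cpart_Csum; apply: Rsum_ext => i.
by rewrite /inner_term; case: ifP => _; rewrite Cpart_plus !Cpart_Rmul.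
Qed.

Lemma balance_of_inner (phi : X -> C) b n : (K <= n.1)%nat ->
  inner_eq M (fun w => phi (inr w)) n -> balance (rate M) outX (fun x => Cpart b (phi x)) (inr n).
Proof. by move=> Kn /(inner_eq_part b); apply: balance_high. Qed.

Context {pV : V -> R} {pW : W c -> R}.
Hypothesis hp : equilibrium M pV pW.

Definition pC : X -> C := state (fun v => RtoC (pV v)) (fun n => RtoC (pW n)).

Lemma equilibrium_balance b y : balance (rate M) outX (fun x => Cpart b (pC x)) y.
Proof.
case: hp => _ [_ [balV [balW _]]].
by case: y => [v|n]; apply: balance_of_complex; [apply: balV | apply: balW].
Qed.

Lemma equilibrium_mass b : is_Xsum (fun x => Cpart b (pC x)) (Cpart b (RtoC 1)).
Proof. by case: hp => _ [_ [_ [_ norm]]]; apply: is_Xsum_of_normalized. Qed.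

Lemma equilibrium_csummable : csummable pC.
Proof.
case: hp => _ [pW0 _]; apply: csummable_state.
exists (1 - Rsum (fun v => pV v)); apply: is_series_ext (equilibrium_mass true) => m /=.
by apply: Rsum_ext => f; rewrite Cmod_R Rabs_pos_eq.
Qed.

Hypothesis hirr : irreducible M.

Lemma balanced_eq_equilibrium (phi : X -> C) : csummable phi ->
  (forall b y, balance (rate M) outX (fun x => Cpart b (phi x)) y) ->
  (forall b, is_Xsum (fun x => Cpart b (phi x)) (Cpart b (RtoC 1))) ->
  forall x, phi x = pC x.
Proof.
move=> sphi bal mass x; apply: C_eq_parts => b.
pose mu x := Cpart b (phi x) + -1 * Cpart b (pC x).
suff : mu x = 0 by rewrite /mu; lra.
apply: (balance_mass0 (rate M) outX rate_ge0 is_Xsum_rate outX_bounded hirr).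
- exact: summable_plus (csummable_part b sphi)
    (summable_scal (-1) (csummable_part b equilibrium_csummable)).
- by move=> y; apply: balance_plus (bal b y) (balance_scal _ _ (equilibrium_balance b y)).
- apply: is_Xsum_eq (is_Xsum_plus (mass b) (is_Xsum_scal (equilibrium_mass b))) _ _ => //; ring.
Qed.

Context {N : nat} {ps : 'I_N -> W c -> C}.
Hypothesis ps_abs_conv : forall j, abs_conv (ps j).
Hypothesis ps_inner : forall j, inner_solution M (ps j).
Hypothesis ps_indep : lin_indep ps.

Definition comb_state (al : 'I_N -> C) (qV : V -> C) : X -> C := state qV (lin_comb al ps).

Lemma abs_conv_lin_comb al : abs_conv (lin_comb al ps).
Proof.
pose U m := Rsum (fun j => Cmod (al j) * Rsum (fun f => Cmod (ps j (m, f)))).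
have exU : ex_series U.
  exists (Rsum (fun j => Cmod (al j) * Series (fun m => Rsum (fun f => Cmod (ps j (m, f)))))).
  apply: is_series_Rsum => j.
  exact: (is_series_scal (Cmod (al j)) _ _ (Series_correct _ (ps_abs_conv j))).
apply: (ex_series_le _ U) exU => m.
rewrite /norm /= /abs /= Rabs_pos_eq; last by apply: Rsum_ge0 => f; apply: Cmod_ge_0.
have -> : U m = Rsum (fun f => Rsum (fun j => Cmod (al j) * Cmod (ps j (m, f)))).
  by rewrite /U /Rsum exchange_big; apply: eq_bigr => j _; rewrite big_distrr.
apply: Rsum_le => f; apply: Rle_trans (Cmod_Csum _) _.
by apply: Rsum_le => j; rewrite Cmod_mult; apply: Rle_refl.
Qed.

Lemma comb_state_csummable al qV : csummable (comb_state al qV).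
Proof. exact: csummable_state (abs_conv_lin_comb al). Qed.

Lemma comb_state_balance_high al qV b n : (K <= n.1)%nat ->
  balance (rate M) outX (fun x => Cpart b (comb_state al qV x)) (inr n).
Proof.
by move=> Kn; apply: (balance_of_inner _ _ _ Kn); apply: inner_eq_lin_comb => j; apply: ps_inner.
Qed.

Lemma lin_comb_inj al al' : (forall n, lin_comb al ps n = lin_comb al' ps n) -> al = al'.
Proof.
move=> al_al'; apply: functional_extensionality => j.
have diff0 n : lin_comb (fun j => Cminus (al j) (al' j)) ps n = RtoC 0.
  transitivity (Cplus (lin_comb al ps n) (Cmult (Copp (RtoC 1)) (lin_comb al' ps n))).
    by rewrite /lin_comb /Csum big_distrr -big_split; apply: eq_bigr => i _ /=; ring.
  by rewrite al_al'; ring.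
transitivity (Cplus (al' j) (Cminus (al j) (al' j))); first ring.
by rewrite (ps_indep _ diff0 j) Cplus_0_r.
Qed.

Lemma comb_state_equilibrium al qV :
  (forall y, balanceV M qV (lin_comb al ps) y) ->
  (forall n, (n.1 < K)%nat -> balanceW M qV (lin_comb al ps) n) ->
  normalized qV (lin_comb al ps) -> forall n, lin_comb al ps n = RtoC (pW n).
Proof.
move=> balV balW norm n.
apply: (balanced_eq_equilibrium _ (comb_state_csummable al qV) _
  (fun b => is_Xsum_of_normalized _ _ b norm) (inr n)).
move=> b [v|m]; first by apply: balance_of_complex; apply: balV.
case: (ltnP m.1 K) => [lt|ge]; last exact: comb_state_balance_high.
by apply: balance_of_complex; apply: balW.
Qed.

Hypothesis hK : (0 < K)%nat.

(* The square system for the coefficients: its unknowns are the coefficients of the [ps j]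
   and the values on V; its equations are balance at V and at the states below level [K],
   except that the balance at [j0] is replaced by the normalization. *)
Local Notation Unknown := ('I_N + V)%type.
Local Notation Equation := (('I_K * {ffun 'I_c -> bool}) + V)%type.

Definition eq_state (j : Equation) : X :=
  match j with inl kf => inr (nat_of_ord kf.1, kf.2) | inr v => inl v end.

Definition j0 : Equation := inl (Ordinal hK, [ffun => false]).

Definition eq_functional (j : Equation) : (X -> R) -> R :=
  if j == j0 then Xsum_val else fun mu => residual (rate M) outX mu (eq_state j).

Lemma eq_functional_linear j : linear_on_summable (eq_functional j).
Proof.
rewrite /eq_functional; case: eqP => _; first exact: Xsum_val_linear.
exact: residual_linear (rate M) outX rate_ge0 is_Xsum_rate outX_bounded _.
Qed.

Definition unknown_state (u : Unknown) : X -> C :=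
  match u with
  | inl j => state (fun _ => RtoC 0) (ps j)
  | inr v => state (fun v' => if v' == v then RtoC 1 else RtoC 0) (fun _ => RtoC 0)
  end.

Lemma unknown_state_csummable u : csummable (unknown_state u).
Proof.
case: u => [j|v]; apply: csummable_state; first exact: ps_abs_conv.
exists 0; apply: is_series_zero => m.
by rewrite (Rsum_ext (g := fun _ => 0)) ?Rsum0 // => f; rewrite Cmod_R Rabs_R0.
Qed.

Lemma big_unknown_state (x : Unknown -> C) z :
  \big[Cplus/RtoC 0]_(u <- index_enum Unknown) Cmult (x u) (unknown_state u z) =
  comb_state (fun j => x (inl j)) (fun v => x (inr v)) z.
Proof.
rewrite big_sumType /=; case: z => [v|w] /=.
  rewrite big1 => [|j _]; last by rewrite Cmult_0_r.
  rewrite Cplus_0_l (bigD1 v) //= eqxx Cmult_1_r big1 ?Cplus_0_r // => v' ne.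
  by rewrite eq_sym (negbTE ne) Cmult_0_r.
by rewrite [X in Cplus _ X]big1 ?Cplus_0_r // => v _; rewrite Cmult_0_r.
Qed.

Lemma system_solution_balanced al qV (e : Equation -> C) :
  (forall j, Cext (eq_functional j) (comb_state al qV) = e j) ->
  (forall j, j != j0 -> e j = RtoC 0) ->
  forall b, (forall y, balance (rate M) outX (fun x => Cpart b (comb_state al qV x)) y) /\
    is_Xsum (fun x => Cpart b (comb_state al qV x)) (Cpart b (e j0)).
Proof.
move=> sol e0 b; set mu := fun x => Cpart b (comb_state al qV x).
have smu : summable mu by apply: csummable_part; apply: comb_state_csummable.
have bal_eq j : j != j0 -> balance (rate M) outX mu (eq_state j).
  move=> ne; apply/(balanceE (rate M) outX rate_ge0 is_Xsum_rate outX_bounded _ smu).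
  have := congr1 (Cpart b) (sol j).
  by rewrite Cpart_Cext /eq_functional (negbTE ne) e0 // Cpart_RtoC if_same.
have bal_off y : y <> eq_state j0 -> balance (rate M) outX mu y.
  case: y => [v|[m f]] ne; first by apply: (bal_eq (inr v)).
  case: (ltnP m K) => [mK|Km]; last exact: comb_state_balance_high.
  apply: (bal_eq (inl (Ordinal mK, f))); apply/eqP => /(congr1 eq_state); exact: ne.
split=> [y|].
  case: (eqVneq y (eq_state j0)) => [->|/eqP]; last exact: bal_off.
  exact: (balance_from_others (rate M) outX rate_ge0 is_Xsum_rate outX_bounded smu bal_off).
have [s mus] := summable_is_Xsum smu.
have := congr1 (Cpart b) (sol j0); rewrite Cpart_Cext /eq_functional eqxx -/mu (Xsum_valE mus).
by move <-.
Qed.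

Lemma system_kernel_trivial al qV :
  (forall j, Cext (eq_functional j) (comb_state al qV) = RtoC 0) ->
  (forall j, al j = RtoC 0) /\ (forall v, qV v = RtoC 0).
Proof.
move=> sol; have state0 z : comb_state al qV z = RtoC 0.
  apply: C_eq_parts => b; rewrite Cpart_RtoC if_same.
  have [bal mass] := system_solution_balanced _ _ _ sol (fun _ _ => erefl) b.
  rewrite Cpart_RtoC if_same in mass.
  exact: (balance_mass0 (rate M) outX rate_ge0 is_Xsum_rate outX_bounded hirr
    (csummable_part b (comb_state_csummable _ _)) bal mass z).
by split=> [|v]; [apply: ps_indep => n; apply: state0 (inr n) | apply: state0 (inl v)].
Qed.

Lemma system_solution_equilibrium al qV :
  (forall j, Cext (eq_functional j) (comb_state al qV) = if j == j0 then RtoC 1 else RtoC 0) ->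
  forall n, RtoC (pW n) = lin_comb al ps n.
Proof.
move=> sol n; have e0 j : j != j0 -> (if j == j0 then RtoC 1 else RtoC 0) = RtoC 0.
  by move=> /negbTE ->.
have bal := system_solution_balanced _ _ _ sol e0; symmetry.
apply: (balanced_eq_equilibrium _ (comb_state_csummable _ _) (fun b => proj1 (bal b)) _ (inr n)).
by move=> b; have [_] := bal b; rewrite eqxx.
Qed.

Hypothesis hN : N = (2 ^ c * K)%nat.

Lemma equilibrium_comb_exists : exists al, forall n, RtoC (pW n) = lin_comb al ps n.
Proof.
pose A (u : Unknown) (j : Equation) := Cext (eq_functional j) (unknown_state u).
have sys x j : Csum (fun u => Cmult (x u) (A u j)) =
    Cext (eq_functional j) (comb_state (fun j => x (inl j)) (fun v => x (inr v))).
  rewrite /Csum -(Cext_big _ _ _ _ (eq_functional_linear j) unknown_state_csummable).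
  by congr Cext; apply: functional_extensionality => z; apply: big_unknown_state.
have card : #|{: Unknown}| = #|{: Equation}|.
  by rewrite !card_sum card_ord card_prod card_ord card_ffun card_bool card_ord hN mulnC.
have [|x x_sol] :=
    square_system_solvable_C _ _ A card _ (fun j => if j == j0 then RtoC 1 else RtoC 0).
  move=> x x0.
  have [al0 qV0] := system_kernel_trivial _ _ (fun j => etrans (esym (sys x j)) (x0 j)).
  by case=> [j|v]; [apply: al0 | apply: qV0].
exists (fun j => x (inl j)).
exact: system_solution_equilibrium _ _ (fun j => etrans (esym (sys x j)) (x_sol j)).
Qed.

End Model.

Theorem lemma2 (c K : nat) (V : finType) (M : model c K V)
  (hc : (1 <= c)%nat) (hK : (1 <= K)%nat)
  (hM : model_ok M) (hirr : irreducible M)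
  (pV : V -> R) (pW : W c -> R) (hp : equilibrium M pV pW)
  (ps : 'I_(2 ^ c * K) -> W c -> C)
  (hps_ac : forall j, abs_conv (ps j))
  (hps_sol : forall j, inner_solution M (ps j))
  (hps_ind : lin_indep ps) :
  exists alpha : 'I_(2 ^ c * K) -> C,
    (forall n : W c, RtoC (pW n) = lin_comb alpha ps n) /\
    (forall alpha' : 'I_(2 ^ c * K) -> C,
       (forall n : W c, RtoC (pW n) = lin_comb alpha' ps n) -> alpha' = alpha) /\
    (forall (alpha' : 'I_(2 ^ c * K) -> C) (qV : V -> C),
       (forall y : V, balanceV M qV (lin_comb alpha' ps) y) ->
       (forall n : W c, (n.1 < K)%nat -> balanceW M qV (lin_comb alpha' ps) n) ->
       normalized qV (lin_comb alpha' ps) ->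
       alpha' = alpha).
Proof.
have [al al_p] := equilibrium_comb_exists hM hp hirr hps_ac hps_sol hps_ind hK erefl.
exists al; split=> //; split=> [al' al'_p | al' qV balV balW norm];
  apply: (lin_comb_inj hps_ind) => n; rewrite -al_p.
- exact: esym (al'_p n).
- exact: (comb_state_equilibrium hM hp hirr hps_ac hps_sol al' qV balV balW norm n).
Qed.
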